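(* Let $(\mathcal{L},\mathcal{G})$ be a flag built lattice and $F\in\mathcal{L}\setminus\{\hat0,\hat1\}$. Then the restriction $(\mathcal{L}^F,\mathcal{G}^F)$ and the contraction $(\mathcal{L}_F,\mathcal{G}_F)$ are flag built lattices.
   Context: $\mathcal{L}$ is a finite geometric lattice. A building set is $\mathcal{G}\subseteq\mathcal{L}\setminus\{\hat0\}$ such that for every $F\neq\hat0$ the join map $\prod_{G\in\max\mathcal{G}_{\leqslant F}}[\hat0,G]\to[\hat0,F]$ is a poset isomorphism ($\max\mathcal{G}_{\leqslant F}$ = maximal elements of $\{G\in\mathcal{G}:G\leqslant F\}$); $(\mathcal{L},\mathcal{G})$ is a built lattice. $\mathcal{S}\subseteq\mathcal{G}$ is nested if for every antichain $A\subseteq\mathcal{S}$ and every $\{S_1,\dots,S_k\}\subseteq A$, $k\geqslant2$, $S_1\vee\dots\vee S_k\notin\mathcal{G}$. $\mathbf{N}(\mathcal{L},\mathcal{G})$ is the simplicial complex of nested sets contained in $\mathcal{G}\setminus\max\mathcal{G}$; $(\mathcal{L},\mathcal{G})$ is flag if $\mathbf{N}(\mathcal{L},\mathcal{G})$ is a flag complex (all minimal non-faces have size $2$). Restriction: $\mathcal{L}^F=[\hat0,F]$, $\mathcal{G}^F=\mathcal{G}\cap[\hat0,F]$. Contraction: $\mathcal{L}_F=[F,\hat1]$, $\mathcal{G}_F=\{F\vee G:G\in\mathcal{G}\}\setminus\{F\}$ (with $F$ as bottom element of $\mathcal{L}_F$). *)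

(* A finite lattice L is a finTBLatticeType T; intervals
   [lo, hi] of T are treated as (sub)lattices: they are convex sublattices,
   so order, meet, and joins of nonempty families agree with those of T. *)
From HB Require Import structures.
From mathcomp Require Import all_boot all_order.
Set Implicit Arguments. Unset Strict Implicit. Unset Printing Implicit Defensive.
Import Order.TTheory.
Local Open Scope order_scope.

Section BuiltLattices.
Context {d : Order.disp_t} {T : finTBLatticeType d}.

Definition in_itv (lo hi x : T) : bool := (lo <= x) && (x <= hi).

Definition covers (x y : T) : bool :=
  (x < y) && [forall z : T, ~~ ((x < z) && (z < y))].

Definition atoms (lo hi : T) : {set T} :=
  [set a | in_itv lo hi a & covers lo a].

(* join of a family inside the interval with bottom lo (empty join = lo) *)
Definition ijoin (lo : T) (A : {set T}) : T := lo `|` \join_(x in A) x.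

Definition geometric (lo hi : T) : Prop :=
  [/\ lo <= hi,
      (forall x, in_itv lo hi x -> x = ijoin lo [set a in atoms lo hi | a <= x]) &
      (forall x y, in_itv lo hi x -> in_itv lo hi y ->
         covers (x `&` y) x -> covers y (x `|` y))].

Definition maxel (S : {set T}) : {set T} :=
  [set x in S | [forall y in S, (x <= y) ==> (y == x)]].

(* elements of the product poset prod_{g in M} [lo, g], represented by
   functions (only their values on M matter) *)
Definition in_prod (lo : T) (M : {set T}) (f : {ffun T -> T}) : Prop :=
  forall g, g \in M -> (lo <= f g) && (f g <= g).

Definition prod_join (lo : T) (M : {set T}) (f : {ffun T -> T}) : T :=
  lo `|` \join_(g in M) f g.

Definition building (lo hi : T) (G : {set T}) : Prop :=
  G \subset [set x | in_itv lo hi x & x != lo] /\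
  forall F : T, in_itv lo hi F -> F != lo ->
    let M := maxel [set g in G | g <= F] in
    (* the join map prod_{g in M} [lo,g] -> [lo,F] is a poset isomorphism:
       surjective and an order embedding *)
    (forall y, in_itv lo F y -> exists f : {ffun T -> T}, in_prod lo M f /\ prod_join lo M f = y) /\
    (forall f f' : {ffun T -> T}, in_prod lo M f -> in_prod lo M f' ->
       ((forall g, g \in M -> f g <= f' g) <-> prod_join lo M f <= prod_join lo M f')).

Definition built (lo hi : T) (G : {set T}) : Prop :=
  geometric lo hi /\ building lo hi G.

Definition antichain (A : {set T}) : Prop :=
  forall x y, x \in A -> y \in A -> x <= y -> x = y.

Definition nested (G S : {set T}) : Prop :=
  S \subset G /\
  forall A : {set T}, A \subset S -> antichain A ->
    forall B : {set T}, B \subset A -> (1 < #|B|)%N -> (\join_(x in B) x) \notin G.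

(* vertex set of the nested set complex N(L,G) *)
Definition nvertices (G : {set T}) : {set T} := G :\: maxel G.

(* faces of N(L,G): nested sets contained in G \ max G; flag: all minimal
   non-faces have size 2 *)
Definition flag (G : {set T}) : Prop :=
  forall N : {set T}, N \subset nvertices G -> ~ nested G N ->
    (forall N' : {set T}, N' \proper N -> nested G N') -> #|N| = 2%N.

Definition flag_built (lo hi : T) (G : {set T}) : Prop :=
  built lo hi G /\ flag G.

Definition restrG (G : {set T}) (F : T) : {set T} := [set g in G | g <= F].
Definition contrG (G : {set T}) (F : T) : {set T} := [set F `|` g | g in G] :\ F.

End BuiltLattices.

From HB Require Import structures.
From mathcomp Require Import all_boot all_order.
From Stdlib Require Import Classical.
Set Implicit Arguments. Unset Strict Implicit. Unset Printing Implicit Defensive.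
Import Order.LTheory.
Local Open Scope order_scope.

(* A building set G splits every interval [0, X] as the product of the
   intervals [0, m], m running over the maximal elements of G below X (the
   factors of X); hence meeting with a factor is a join-preserving projection
   on [0, X] and distinct factors meet in 0.  The restriction to [0, F] keeps
   the factors and the nested sets of the elements below F.  For the contraction at F, the
   G_F-factors of X >= F are exactly the joins F \/ m with m a factor of X not
   below F, which carries the decomposition of [0, X] over to [F, X].  For
   flagness, let B be an antichain of G_F whose join F \/ m (m in G) lies in
   G_F.  The elements of G lying below F /\ m or sent into B by g |-> F \/ g
   join to m, so their maximal elements form a non-nested subset of G;
   flagness of G yields two of them whose join is in G, and their images are
   two elements of B whose join is in G_F. *)

Notation factors G X := (maxel [set g in G | g <= X]).

Section BuiltLattices.
Context {d : Order.disp_t} {T : finTBLatticeType d}.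
Implicit Types (G S N A B : {set T}) (F X Y a b g m y : T).

Lemma in_itv_bot_top X : in_itv \bot \top X.
Proof. by rewrite /in_itv le0x lex1. Qed.

Lemma maxelP S m :
  reflect (m \in S /\ forall y, y \in S -> m <= y -> y = m) (m \in maxel S).
Proof.
rewrite /maxel inE; apply: (iffP andP) => [[mS /forall_inP maxm]|[mS maxm]].
  by split=> // y yS my; apply/eqP; exact: (implyP (maxm y yS)).
by split=> //; apply/forall_inP => y yS; apply/implyP => /(maxm y yS) ->.
Qed.

Lemma maxel_ge S a : a \in S -> exists2 m, m \in maxel S & a <= m.
Proof.
move=> aS; pose down y := #|[set z | z <= y]|.
have aA : (a \in S) && (a <= a) by rewrite aS lexx.
have [m /andP [mS am] maxm] := @arg_maxnP _ a (fun y => (y \in S) && (a <= y)) down aA.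
exists m => //; apply/maxelP; split=> // y yS my; apply/eqP; apply: contraT => nym.
have ltmy : (down m < down y)%N.
  apply: proper_card; apply/properP; split.
    by apply/subsetP => z; rewrite !inE => /le_trans; apply.
  by exists y; rewrite !inE ?lexx //; rewrite eq_le my andbT in nym.
have : (down y <= down m)%N by apply: maxm; rewrite yS (le_trans am my).
by rewrite leqNgt ltmy.
Qed.

Lemma factorP G X m : m \in factors G X -> m \in G /\ m <= X.
Proof. by case/maxelP; rewrite inE => /andP. Qed.

Lemma factor_self G X : X \in G -> X \in factors G X.
Proof.
move=> XG; apply/maxelP; split=> [|Y]; first by rewrite inE XG lexx.
by rewrite inE => /andP [_ YX] XY; apply/le_anti; rewrite YX XY.
Qed.

Lemma factor_ge G X g : g \in G -> g <= X -> exists2 m, m \in factors G X & g <= m.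
Proof. by move=> gG gX; apply: maxel_ge; rewrite inE gG. Qed.

Lemma building_intro lo hi G :
  G \subset [set x | in_itv lo hi x & x != lo] ->
  (forall X, in_itv lo hi X -> X != lo ->
     [/\ forall m, m \in factors G X -> lo <= m,
         forall y, in_itv lo X y -> y = lo `|` \join_(m in factors G X) (y `&` m) &
         forall t : {ffun T -> T}, in_prod lo (factors G X) t ->
           forall m0, m0 \in factors G X ->
           (lo `|` \join_(m in factors G X) t m) `&` m0 = t m0]) ->
  building lo hi G.
Proof.
move=> sub H; split=> // X HX Xlo /=; have [lo_le decomp proj] := H X HX Xlo.
split=> [y ylX | f f' fM f'M].
  exists [ffun x => y `&` x]; split.
    by move=> g gM; rewrite ffunE lexI leIr andbT (andP ylX).1 lo_le.
  rewrite [RHS](decomp y ylX) /prod_join; congr (_ `|` _).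
  by apply: eq_bigr => g _; rewrite ffunE.
split=> [le_ff' | le_join g gM].
  apply: leU2 (lexx _) _; apply/joinsP => g gM.
  exact: joins_min (gM) (le_ff' g gM).
by rewrite -(proj f fM g gM) -(proj f' f'M g gM); exact: leI2 le_join (lexx g).
Qed.

Section Building.
Variable G : {set T}.
Hypothesis buildingG : building \bot \top G.

Lemma bot_notin_building : \bot \notin G.
Proof.
apply/negP; case: buildingG => /subsetP sub _ /sub.
by rewrite inE eqxx andbF.
Qed.

Lemma factor_decomp X y : y <= X -> y = \join_(m in factors G X) (y `&` m).
Proof.
have [-> | XnB] := eqVneq X \bot.
  by rewrite lex0 => /eqP ->; rewrite big1 // => m _; rewrite meet0x.
move=> yX; have [surj _] := buildingG.2 X (in_itv_bot_top X) XnB.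
have [f [fM <-]] := surj y (introT andP (conj (le0x y) yX)).
rewrite /prod_join join0x; apply/le_anti/andP; split; last first.
  by apply/joinsP => m _; exact: leIl.
apply/joinsP => m mM; apply: (joins_min (j := m)) (mM) _.
by rewrite lexI (joins_sup _ mM); case/andP: (fM m mM).
Qed.

Lemma factor_meet_joins_family X (t : T -> T) m0 :
  (forall m, m \in factors G X -> t m <= m) -> m0 \in factors G X ->
  (\join_(m in factors G X) t m) `&` m0 = t m0.
Proof.
move=> tM m0M; have [m0G m0X] := factorP m0M.
have [XB | XnB] := eqVneq X \bot.
  by rewrite XB lex0 in m0X; rewrite (eqP m0X) (negbTE bot_notin_building) in m0G.
have [_ emb] := buildingG.2 X (in_itv_bot_top X) XnB.
set y := \join_(m in _) t m.
pose e := [ffun x => y `&` x]; pose t' := [ffun x => t x].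
have eM : in_prod \bot (factors G X) e by move=> m _; rewrite ffunE le0x leIr.
have t'M : in_prod \bot (factors G X) t' by move=> m mM; rewrite ffunE le0x tM.
have le_y_t0 : y `&` m0 <= t m0.
  have [_ back] := emb e t' eM t'M.
  have := back _ m0 m0M; rewrite !ffunE; apply.
  rewrite /prod_join !join0x; apply: (@le_trans _ _ y).
    by apply/joinsP => m _; rewrite ffunE leIl.
  by apply/joinsP => m mM; apply: (joins_min (j := m)) (mM) _; rewrite ffunE.
by apply/le_anti; rewrite le_y_t0 lexI (joins_sup _ m0M) tM.
Qed.

Lemma factor_meetUl X a b m : a <= X -> b <= X -> m \in factors G X ->
  (a `|` b) `&` m = (a `&` m) `|` (b `&` m).
Proof.
move=> aX bX mM.
rewrite {1}(factor_decomp aX) {1}(factor_decomp bX) -big_split.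
by rewrite factor_meet_joins_family // => x _; rewrite leUx !leIr.
Qed.

Lemma factor_meet_joins X m (I : Type) (r : seq I) (P : pred I) (f : I -> T) :
  m \in factors G X -> (forall i, P i -> f i <= X) ->
  (\join_(i <- r | P i) f i) `&` m = \join_(i <- r | P i) (f i `&` m).
Proof.
move=> mM fX; apply: (proj2 (big_ind2 (fun y z => y <= X /\ y `&` m = z) _ _ _)).
- by rewrite le0x meet0x.
- move=> y1 z1 y2 z2 [y1X <-] [y2X <-].
  by rewrite leUx y1X y2X (factor_meetUl y1X y2X mM).
- by move=> i /fX.
Qed.

Lemma factor_meet_eq0 X m m' :
  m \in factors G X -> m' \in factors G X -> m != m' -> m `&` m' = \bot.
Proof.
move=> mM m'M nmm'.
have tM x : x \in factors G X -> (if x == m then m else \bot) <= x.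
  by case: eqP => [-> | _]; rewrite ?lexx ?le0x.
have := factor_meet_joins_family tM m'M.
rewrite eq_sym (negbTE nmm') (bigD1 m) //= eqxx big1 ?joinx0 // => x /andP [_].
by move=> /negbTE ->.
Qed.

Lemma factor_meetUl_other X F m m' : F <= X ->
  m \in factors G X -> m' \in factors G X -> m != m' ->
  (F `|` m) `&` m' = F `&` m'.
Proof.
move=> FX mM m'M nmm'.
by rewrite (factor_meetUl FX (factorP mM).2 m'M) (factor_meet_eq0 mM m'M nmm') joinx0.
Qed.

Lemma factor_le_joinl X F m m' : F <= X ->
  m \in factors G X -> m' \in factors G X -> m != m' -> m' <= F `|` m -> m' <= F.
Proof.
move=> FX mM m'M nmm' /meet_r.
by rewrite (factor_meetUl_other FX mM m'M nmm') => <-; exact: leIl.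
Qed.

Lemma factor_ge_outside X F m g : F <= X -> m \in factors G X -> X <= F `|` m ->
  g \in G -> g <= X -> ~~ (g <= F) -> g <= m.
Proof.
move=> FX mM XFm gG gX ngF; have [m' m'M gm'] := factor_ge gG gX.
have [<- // | nm'm] := eqVneq m' m.
have m'F : m' <= F.
  apply: (factor_le_joinl FX mM (m'M)); first by rewrite eq_sym.
  exact: le_trans (factorP m'M).2 XFm.
by rewrite (le_trans gm' m'F) in ngF.
Qed.

End Building.

Lemma geometric_restr F : geometric (\bot : T) \top -> geometric \bot F.
Proof.
case=> _ atomistic semimod; split=> [|x /andP [_ xF]|x y _ _].
- exact: le0x.
- rewrite [LHS](atomistic x (in_itv_bot_top x)); congr ijoin; apply/setP => a.
  rewrite !inE /in_itv !le0x !lex1 /=; apply: andb_id2r => ax.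
  by rewrite (le_trans ax xF).
- exact: semimod (in_itv_bot_top x) (in_itv_bot_top y).
Qed.

Lemma building_restr G F : building \bot \top G -> building \bot F (restrG G F).
Proof.
case=> /subsetP sub iso; split=> [|F' /andP [_ F'F] F'nB].
  apply/subsetP => g; rewrite !inE /in_itv le0x => /andP [/sub].
  by rewrite inE /in_itv le0x => /andP [_ ->] ->.
have -> : [set g in restrG G F | g <= F'] = [set g in G | g <= F'].
  apply/setP => g; rewrite !inE -andbA; congr (_ && _).
  by apply/andb_idl => /le_trans; apply.
exact: iso F' (in_itv_bot_top F') F'nB.
Qed.

Lemma nested_restrG G F N :
  N \subset restrG G F -> nested (restrG G F) N <-> nested G N.
Proof.
move=> NR; have RG : restrG G F \subset G.
  by apply/subsetP => x; rewrite inE => /andP [].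
split=> [[_ nestR] | [_ nestG]].
  split=> [|A AN antA B BA cardB]; first exact: subset_trans NR RG.
  apply: contra (nestR A AN antA B BA cardB) => jG; rewrite inE jG.
  apply/joinsP => x /(subsetP BA) /(subsetP AN) /(subsetP NR).
  by rewrite inE => /andP [].
split=> // A AN antA B BA cardB.
by apply: contra (nestG A AN antA B BA cardB); exact: (subsetP RG).
Qed.

Lemma nvertices_restrG G F : nvertices (restrG G F) \subset nvertices G.
Proof.
apply/subsetP => x; rewrite !in_setD => /andP [nmaxR xR].
move: (xR); rewrite inE => /andP [xG xF]; rewrite xG andbT.
apply: contra nmaxR => /maxelP [_ maxG]; apply/maxelP; split=> // y.
by rewrite inE => /andP [yG _]; exact: maxG.
Qed.

Lemma flag_restr G F : flag G -> flag (restrG G F).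
Proof.
move=> flagG N NV nN minN.
have NR : N \subset restrG G F := subset_trans NV (subsetDl _ _).
apply: flagG (subset_trans NV (nvertices_restrG G F)) _ _.
  by move/(nested_restrG NR).
move=> N' ltN'N; apply/(nested_restrG (subset_trans (proper_sub ltN'N) NR)).
exact: minN.
Qed.

Lemma covers_join_atom F a : geometric (\bot : T) \top ->
  covers \bot a -> ~~ (a <= F) -> covers F (F `|` a).
Proof.
case=> _ _ semimod atom_a naF.
have aF0 : a `&` F = \bot.
  apply/eqP; apply: contraT => aFn0.
  case/andP: atom_a => _ /forallP /(_ (a `&` F)).
  rewrite !lt_def aFn0 le0x leIl /= andbT negbK => /eqP /esym /meet_idPl aF.
  by rewrite aF in naF.
by rewrite joinC; apply: semimod; rewrite ?in_itv_bot_top // aF0.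
Qed.

Lemma geometric_contr F : geometric (\bot : T) \top -> geometric F \top.
Proof.
move=> geomT; case: (geomT) => _ atomistic semimod.
split=> [|x /andP [Fx _]|x y _ _].
- exact: lex1.
- apply/le_anti/andP; split; last first.
    by rewrite /ijoin leUx Fx; apply/joinsP => a; rewrite inE => /andP [_].
  rewrite {1}(atomistic x (in_itv_bot_top x)) /ijoin join0x; apply/joinsP => a.
  rewrite !inE /in_itv le0x lex1 /= => /andP [atom_a ax].
  have [aF | naF] := boolP (a <= F); first exact: lexUl.
  apply: lexUr; apply: (joins_min (j := F `|` a)); last exact: leUr.
  by rewrite !inE /in_itv leUl lex1 leUx Fx ax covers_join_atom.
- exact: semimod (in_itv_bot_top x) (in_itv_bot_top y).
Qed.

Lemma contrGP G F Y :
  reflect (Y != F /\ exists2 g, g \in G & Y = F `|` g) (Y \in contrG G F).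
Proof.
rewrite /contrG in_setD1.
apply: (iffP andP) => [[nYF /imsetP [g gG eY]] | [nYF [g gG eY]]].
  by split=> //; exists g.
by split; rewrite // eY; apply: imset_f.
Qed.

Lemma join_set2 a b : \join_(x in [set a; b]) x = a `|` b.
Proof.
have [-> | nab] := eqVneq a b; first by rewrite setUid big_set1 joinxx.
by rewrite big_setU1 ?inE // big_set1.
Qed.

Lemma antichainS A B : A \subset B -> antichain B -> antichain A.
Proof. by move=> /subsetP AB antB x y /AB xB /AB; exact: antB. Qed.

Lemma not_nested_antichain G A : antichain A -> (1 < #|A|)%N ->
  \join_(x in A) x \in G -> ~ nested G A.
Proof. by move=> antA cardA jG [_ /(_ A (subxx A) antA A (subxx A) cardA)]; rewrite jG. Qed.

Lemma nested_pair G a b : a \in G -> b \in G -> a `|` b \notin G -> nested G [set a; b].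
Proof.
move=> aG bG nabG; split=> [|A Aab _ B BA cardB].
  by apply/subsetP => x; rewrite !inE => /orP [] /eqP ->.
have /eqP -> : B == [set a; b].
  by rewrite eqEcard (subset_trans BA Aab) (leq_trans _ cardB) // cards2 ltnS leq_b1.
by rewrite join_set2.
Qed.

Lemma not_nested_witness G N : ~ nested G N -> N \subset G ->
  exists B, [/\ B \subset N, antichain B, (1 < #|B|)%N & \join_(x in B) x \in G].
Proof.
move=> nN NG; apply: NNPP => noB; apply: nN; split=> // A AN antA B BA cardB.
apply/negP => jG; apply: noB; exists B; split=> //.
  exact: subset_trans BA AN.
exact: antichainS BA antA.
Qed.

Lemma flag_pair G N : flag G -> N \subset nvertices G -> ~ nested G N ->
  exists a b, [/\ a \in N, b \in N, a != b & a `|` b \in G].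
Proof.
move=> flagG; elim: {N}_.+1 {-2}N (ltnSn #|N|) => [|n IHn] N; first by rewrite ltn0.
move=> cardN NV nN.
case: (classic (forall N', N' \proper N -> nested G N')) => [minN | nminN].
  have /cards2P [a [b [nab eN]]] : #|N| == 2 by rewrite (flagG N NV nN minN).
  have NG := subset_trans NV (subsetDl G (maxel G)).
  have [aG bG] : a \in G /\ b \in G by rewrite !(subsetP NG) // eN !inE eqxx ?orbT.
  exists a, b; rewrite eN !inE !eqxx ?orbT; split=> //.
  by apply/negPn/negP => nabG; apply: nN; rewrite eN; exact: nested_pair.
have [N' nminN'] := not_all_ex_not _ _ nminN.
have [ltN'N nN'] := imply_to_and _ _ nminN'.
have N'N := proper_sub ltN'N.
have [a [b [aN' bN' nab abG]]] :=
  IHn N' (leq_trans (proper_card ltN'N) cardN) (subset_trans N'N NV) nN'.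
by exists a, b; rewrite !(subsetP N'N).
Qed.

Lemma flag_join_pair G S m : flag G -> \bot \notin G -> S \subset G ->
  \join_(s in S) s = m -> m \in G -> m \notin S ->
  exists a b, [/\ a \in maxel S, b \in maxel S, a != b & a `|` b \in G].
Proof.
move=> flagG botG SG <- jG jS; set A := maxel S.
have AS : A \subset S by apply/subsetP => a /maxelP [].
have jA : \join_(a in A) a = \join_(s in S) s.
  apply/le_anti; rewrite le_joins //=; apply/joinsP => s /maxel_ge [a aA sa].
  exact: joins_min (aA) sa.
have antA : antichain A.
  by move=> x y /maxelP [_ maxx] /maxelP [yS _] xy; exact/esym/(maxx _ yS).
have AV : A \subset nvertices G.
  apply/subsetP => a aA; have aS := subsetP AS a aA.
  rewrite in_setD (subsetP SG) // andbT; apply/negP => /maxelP [_ maxa].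
  by move: jS; rewrite (maxa _ jG (joins_sup _ aS)) aS.
have cardA : (1 < #|A|)%N.
  rewrite ltnNge leq_eqVlt ltnS leqn0; apply/negP.
  case/orP => [/cards1P [a eA] | /eqP/cards0_eq eA].
    by move: jS; rewrite -jA eA big_set1 (subsetP AS) // eA inE.
  by move: jG botG; rewrite -jA eA big_set0 => ->.
apply: flag_pair flagG AV _.
by apply: not_nested_antichain antA cardA _; rewrite jA.
Qed.

Section Contraction.
Variables (G : {set T}) (F : T).
Hypotheses (buildingG : building \bot \top G) (flagG : flag G).

Lemma join_factor_contrG X m : F <= X -> m \in factors G X -> ~~ (m <= F) ->
  F `|` m \in factors (contrG G F) X.
Proof.
move=> FX mM nmF; have [mG mX] := factorP mM.
apply/maxelP; split.
  rewrite inE leUx FX mX !andbT; apply/contrGP; split; last by exists m.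
  by apply: contra nmF => /eqP <-; exact: leUr.
move=> Y; rewrite inE => /andP [/contrGP [_ [g gG ->]] FgX] le_mg.
have gX : g <= X by apply: le_trans FgX; exact: leUr.
have [m' m'M gm'] := factor_ge gG gX.
have [em'm | nm'm] := eqVneq m' m.
  by apply/le_anti; rewrite le_mg leUx leUl -em'm (le_trans gm' (leUr _ _)).
have : m <= F.
  apply: (factor_le_joinl buildingG FX m'M mM nm'm).
  exact: le_trans (leUr m F) (le_trans le_mg (leU2 (lexx F) gm')).
by rewrite (negbTE nmF).
Qed.

Lemma contrG_factor X Y : F <= X -> Y \in factors (contrG G F) X ->
  exists m, [/\ m \in factors G X, ~~ (m <= F) & Y = F `|` m].
Proof.
move=> FX /maxelP []; rewrite inE => /andP [/contrGP [nYF [g gG eY]] YX] maxY.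
have gX : g <= X by apply: le_trans YX; rewrite eY leUr.
have [m mM gm] := factor_ge gG gX.
have nmF : ~~ (m <= F).
  by apply: contra nYF => mF; rewrite eY (join_l (le_trans gm mF)).
exists m; split=> //; have /maxelP [FmC _] := join_factor_contrG FX mM nmF.
by apply/esym/maxY => //; rewrite eY; exact: leU2 (lexx F) gm.
Qed.

Lemma contr_decomp X y : F <= y -> y <= X ->
  y = F `|` \join_(Y in factors (contrG G F) X) (y `&` Y).
Proof.
move=> Fy yX; have FX := le_trans Fy yX.
apply/le_anti/andP; split; last first.
  by rewrite leUx Fy; apply/joinsP => Y _; exact: leIl.
rewrite {1}(factor_decomp buildingG yX); apply/joinsP => m mM.
have [mF | nmF] := boolP (m <= F).
  by apply: lexUl; exact: le_trans (leIr _ _) mF.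
apply: lexUr; apply: (joins_min (j := F `|` m)); first exact: join_factor_contrG.
exact: leI2 (lexx y) (leUr _ _).
Qed.

Lemma contr_meet_joins_family X (t : T -> T) Y0 : F <= X ->
  (forall Y, Y \in factors (contrG G F) X -> F <= t Y <= Y) ->
  Y0 \in factors (contrG G F) X ->
  (F `|` \join_(Y in factors (contrG G F) X) t Y) `&` Y0 = t Y0.
Proof.
move=> FX tM Y0M; set Z := F `|` _.
have [m0 [m0M _ eY0]] := contrG_factor FX Y0M.
have /andP [Ft0 t0Y0] := tM Y0 Y0M.
have tX Y : Y \in factors (contrG G F) X -> t Y <= X.
  by move=> YM; apply: le_trans (factorP YM).2; case/andP: (tM Y YM).
have tJX : \join_(Y in factors (contrG G F) X) t Y <= X.
  by apply/joinsP => Y /tX.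
have ZX : Z <= X by rewrite leUx FX.
have off m' m : m' \in factors G X -> m \in factors G X -> m' != m ->
    (F `|` m') `&` m <= t Y0.
  by move=> m'M mM nm'm; rewrite (factor_meetUl_other buildingG FX m'M mM nm'm) leIxl.
apply/le_anti/andP; split; last first.
  by rewrite lexI t0Y0 andbT; apply: lexUr; exact: joins_sup.
rewrite (factor_decomp buildingG (leIxl _ ZX)); apply/joinsP => m mM.
have [-> | nmm0] := eqVneq m m0; last first.
  apply: le_trans (off _ _ m0M mM _); last by rewrite eq_sym.
  by rewrite -eY0; apply: leI2 (leIr _ _) (lexx m).
apply: le_trans (leI2 (leIl Z Y0) (lexx m0)) _.
rewrite /Z (factor_meetUl buildingG FX tJX m0M) leUx leIxl //=.
rewrite (factor_meet_joins buildingG _ m0M tX); apply/joinsP => Y YM.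
have [mY [mYM _ eY]] := contrG_factor FX YM.
have [-> | nYY0] := eqVneq Y Y0; first exact: leIl.
apply: le_trans (off _ _ mYM m0M _); first by rewrite -eY leI2 // (andP (tM Y YM)).2.
by apply: contraNneq nYY0 => emY; rewrite eY eY0 emY.
Qed.

Lemma building_contr : building F \top (contrG G F).
Proof.
apply: building_intro => [|X /andP [FX _] _].
  apply/subsetP => Y /contrGP [nYF [g _ eY]].
  by rewrite inE /in_itv lex1 nYF eY leUl.
split.
- by move=> Y /(contrG_factor FX) [m [_ _ ->]]; exact: leUl.
- by move=> y /andP [Fy yX]; exact: contr_decomp.
- by move=> t tM Y0 Y0M; exact: contr_meet_joins_family.
Qed.

Definition contr_lift B m : {set T} := [set g in G | (g <= F `&` m) || (F `|` g \in B)].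

Lemma join_contr_lift B m : B \subset contrG G F ->
  m \in factors G (\join_(Y in B) Y) -> \join_(Y in B) Y = F `|` m ->
  \join_(g in contr_lift B m) g = m.
Proof.
move=> BC; set X := \join_(Y in B) Y => mM eX; have [mG mX] := factorP mM.
have FX : F <= X by rewrite eX leUl.
have S_le_m g : g \in contr_lift B m -> g <= m.
  rewrite inE => /andP [gG /orP [/le_trans -> // | FgB]]; first exact: leIr.
  have /contrGP [nFgF _] := subsetP BC _ FgB.
  apply: (factor_ge_outside buildingG FX mM _ gG); first by rewrite eX.
    exact: le_trans (leUr g F) (joins_sup _ FgB).
  by apply: contra nFgF => gF; rewrite (join_l gF).
set J := \join_(g in _) g; have Jm : J <= m by exact/joinsP.
have XFJ : X <= F `|` J.
  apply/joinsP => Y YB; have /contrGP [_ [g gG eY]] := subsetP BC Y YB.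
  by rewrite eY; apply: leU2 (lexx F) _; apply: joins_sup; rewrite inE gG -eY YB orbT.
apply/le_anti; rewrite Jm -{1}(meet_r mX) /=.
apply: le_trans (leI2 XFJ (lexx m)) _.
rewrite (factor_meetUl buildingG FX (le_trans Jm mX) mM) leUx leIl andbT.
rewrite {1}(factor_decomp buildingG (lexx (F `&` m))); apply/joinsP => p pM.
have [pG pFm] := factorP pM.
by apply: (joins_min (j := p)); rewrite ?leIr // inE pG pFm.
Qed.

Lemma contr_lift_pair B m a b : B \subset contrG G F ->
  a \in maxel (contr_lift B m) -> b \in maxel (contr_lift B m) -> a != b ->
  a `|` b \in G ->
  [/\ F `|` a \in B, F `|` b \in B, F `|` a != F `|` b &
       (F `|` a) `|` (F `|` b) \in contrG G F].
Proof.
move=> BC /maxelP [aS maxa] /maxelP [bS maxb] nab abG.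
have abS : a `|` b \notin contr_lift B m.
  apply: contra nab => abS.
  by rewrite -(maxa _ abS (leUl a b)) (maxb _ abS (leUr b a)).
have liftB x y : x \in contr_lift B m -> y \in contr_lift B m ->
    x `|` y \in G -> x `|` y \notin contr_lift B m -> F `|` x \in B.
  rewrite !inE => /andP [_ xS] /andP [_ yS] -> /= /norP [nxyFm nFxyB].
  case/orP: xS => // xFm; case/orP: yS => [yFm | FyB].
    by rewrite leUx xFm yFm in nxyFm.
  by rewrite joinA (join_l (le_trans xFm (leIl _ _))) FyB in nFxyB.
have aB := liftB a b aS bS abG abS.
have bB : F `|` b \in B by apply: liftB bS aS _ _; rewrite joinC.
have eJ : (F `|` a) `|` (F `|` b) = F `|` (a `|` b) by rewrite joinACA joinxx.
split=> //.
  apply: contraNneq abS => eab.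
  by rewrite inE abG -eJ -eab joinxx aB orbT.
rewrite eJ; apply/contrGP; split; last by exists (a `|` b).
have /contrGP [nFaF _] := subsetP BC _ aB.
apply: contra nFaF => /eqP eF; apply/eqP/le_anti; rewrite leUl andbT -{2}eF.
exact: leU2 (lexx F) (leUl a b).
Qed.

Lemma contrG_pair B : B \subset contrG G F -> antichain B -> (1 < #|B|)%N ->
  \join_(Y in B) Y \in contrG G F ->
  exists Y1 Y2, [/\ Y1 \in B, Y2 \in B, Y1 != Y2 & Y1 `|` Y2 \in contrG G F].
Proof.
move=> BC antB cardB XC; set X := \join_(Y in B) Y in XC.
have FX : F <= X by case/contrGP: XC => _ [h _ ->]; exact: leUl.
have [m [mM nmF eX]] := contrG_factor FX (factor_self XC).
have joinS := join_contr_lift BC mM eX.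
have mS : m \notin contr_lift B m.
  rewrite inE (factorP mM).1 negb_or; apply/andP; split.
    by apply: contra nmF => /le_trans; apply; exact: leIl.
  rewrite -eX; apply/negP => XB.
  have : B \subset [set X].
    by apply/subsetP => Y YB; rewrite inE (antB _ _ YB XB (joins_sup _ YB)).
  by move/subset_leq_card; rewrite cards1 leqNgt cardB.
have SG : contr_lift B m \subset G by apply/subsetP => g; rewrite inE => /andP [].
have [a [b [aS bS nab abG]]] :=
  flag_join_pair flagG (bot_notin_building buildingG) SG joinS (factorP mM).1 mS.
have [aB bB nFab FabC] := contr_lift_pair BC aS bS nab abG.
by exists (F `|` a), (F `|` b).
Qed.

Lemma flag_contr : flag (contrG G F).
Proof.
move=> N NV nN minN.
have NC : N \subset contrG G F := subset_trans NV (subsetDl _ _).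
have [B [BN antB cardB jB]] := not_nested_witness nN NC.
have [Y1 [Y2 [Y1B Y2B nY12 Y12C]]] := contrG_pair (subset_trans BN NC) antB cardB jB.
have Y12B : [set Y1; Y2] \subset B.
  by apply/subsetP => Y; rewrite !inE => /orP [] /eqP ->.
have card12 : #|[set Y1; Y2]| = 2 by rewrite cards2 nY12.
have nnY12 : ~ nested (contrG G F) [set Y1; Y2].
  by apply: not_nested_antichain (antichainS Y12B antB) _ _; rewrite ?card12 ?join_set2.
suff <- : [set Y1; Y2] = N by [].
apply/eqP; rewrite eqEproper (subset_trans Y12B BN) /=.
by apply/negP => /minN /nnY12.
Qed.

End Contraction.

End BuiltLattices.

Theorem proposition3p17 (d : Order.disp_t) (T : finTBLatticeType d)
  (G : {set T}) (F : T) :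
  flag_built \bot \top G -> F != \bot -> F != \top ->
  flag_built \bot F (restrG G F) /\ flag_built F \top (contrG G F).
Proof.
move=> [[geomT buildingG] flagG] _ _; split; split.
- by split; [exact: geometric_restr | exact: building_restr].
- exact: flag_restr.
- by split; [exact: geometric_contr | exact: building_contr].
- exact: flag_contr.
Qed.
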